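(* Let $G$ be a minimal prime graph complement, and suppose $G$ has a vertex of degree $2$. Then $G$ contains an induced $5$-cycle $S$, and there are three vertices of $S$, exactly two of which are adjacent to each other, such that $G$ is obtained from $S$ by duplicating each of these three vertices some finite (possibly zero) number of times, where duplicating a vertex $v$ means adding a new vertex $w$ adjacent to exactly the neighbors of $v$ (and not to $v$). Equivalently, $G$ is isomorphic to the graph with vertex set $\{A,B\}\cup P\cup Q\cup R$ (disjoint union) with $|P|,|Q|,|R|\ge 1$, in which $A$ is adjacent to every vertex of $P\cup R$, $B$ is adjacent to every vertex of $Q\cup R$, every vertex of $P$ is adjacent to every vertex of $Q$, and there are no other edges. In particular, $G$ is the complement of a reseminant graph.
   Context: All graphs are finite and simple. A graph $G$ is a minimal prime graph complement if $G$ has at least $2$ vertices and: (1) the complement $\overline{G}$ is connected; (2) $G$ is triangle-free; (3) $G$ is $3$-colorable (has a proper vertex coloring with $3$ colors); (4) $G$ is edge-maximal with respect to (2) and (3), i.e. for any two distinct nonadjacent vertices $u,v$ of $G$, the graph obtained by adding the edge $uv$ to $G$ either contains a triangle or is not $3$-colorable. (Its complement is called a minimal prime graph.) A minimal prime graph is reseminant if it is obtained from the $5$-cycle $C_5$ by repeated vertex duplication; in terms of complements, $G$ is the complement of a reseminant graph iff $G$ is obtained from $C_5$ by repeatedly choosing a vertex $v$ and adding a new vertex $w$ adjacent to exactly the neighbors of $v$. *)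

From mathcomp Require Import all_boot.
Set Implicit Arguments. Unset Strict Implicit. Unset Printing Implicit Defensive.

Definition simple_graph (T : finType) (e : rel T) : Prop :=
  (forall x y, e x y = e y x) /\ (forall x, ~~ e x x).

Definition compl_rel (T : finType) (e : rel T) : rel T :=
  fun x y => (x != y) && ~~ e x y.

Definition graph_connected (T : finType) (e : rel T) : Prop :=
  forall x y : T, connect e x y.

Definition triangle_free (T : finType) (e : rel T) : Prop :=
  forall x y z : T, ~ [/\ e x y, e y z & e x z].

Definition colorable (T : finType) (k : nat) (e : rel T) : Prop :=
  exists f : T -> 'I_k, forall x y, e x y -> f x != f y.

Definition add_edge (T : finType) (e : rel T) (u v : T) : rel T :=
  fun x y => [|| e x y, (x == u) && (y == v) | (x == v) && (y == u)].

Definition min_prime_compl (T : finType) (e : rel T) : Prop :=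
  [/\ 1 < #|T|,
      graph_connected (compl_rel e),
      triangle_free e,
      colorable 3 e &
      forall u v : T, u != v -> ~~ e u v ->
        ~ (triangle_free (add_edge e u v) /\ colorable 3 (add_edge e u v))].

Definition degree (T : finType) (e : rel T) (v : T) : nat := #|[set w | e v w]|.

From mathcomp Require Import all_boot.
Set Implicit Arguments. Unset Strict Implicit. Unset Printing Implicit Defensive.

(** Let v have exactly the two neighbours a and b; they are nonadjacent since
    G is triangle-free. Edge-maximality says: two distinct nonadjacent vertices
    with no common neighbour get the same colour in every proper 3-colouring,
    for otherwise the edge between them could be added. A vertex x outside
    N(a) ∪ N(b) ∪ {a, b} shares no neighbour with v, so all such vertices get
    the colour of v and are pairwise nonadjacent. Then colouring N(a) by 1,
    N(b) \ N(a) by 2 and everything else by 0 is proper and separates x from v;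
    hence N(a) ∪ N(b) ∪ {a, b} is everything. The same colouring separates any
    p ∈ N(a) \ N(b) from any q ∈ N(b) \ N(a), so these are all adjacent; both
    private neighbourhoods are nonempty because otherwise a could be
    joined to a private neighbour of b, or a and b would be twins, making
    {a, b} a component of the complement. With P, Q the private
    neighbourhoods and R = N(a) ∩ N(b) (which contains v), triangle-freeness
    leaves no other edges. *)

Definition proper_coloring (T : finType) (k : nat) (e : rel T) (f : T -> 'I_k) :=
  forall x y, e x y -> f x != f y.

Definition private_nbhd (T : finType) (e : rel T) (a b : T) : {set T} :=
  [set x | e a x && ~~ e b x].

Definition common_nbhd (T : finType) (e : rel T) (a b : T) : {set T} :=
  [set x | e a x && e b x].

Lemma private_common_nbhdU (T : finType) (e : rel T) (a b : T) :
  private_nbhd e a b :|: common_nbhd e a b = [set x | e a x].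
Proof. by apply/setP=> x; rewrite !inE; case: (e a x); case: (e b x). Qed.

Lemma private_common_nbhdUr (T : finType) (e : rel T) (a b : T) :
  private_nbhd e b a :|: common_nbhd e a b = [set x | e b x].
Proof. by apply/setP=> x; rewrite !inE; case: (e a x); case: (e b x). Qed.

Lemma nbhd_parts_disjoint (T : finType) (e : rel T) (a b : T) :
  [/\ [disjoint private_nbhd e a b & private_nbhd e b a],
       [disjoint private_nbhd e b a & common_nbhd e a b] &
       [disjoint private_nbhd e a b & common_nbhd e a b]].
Proof.
by split; rewrite -setI_eq0; apply/eqP/setP=> x; rewrite !inE;
  case: (e a x); case: (e b x).
Qed.

Lemma add_edge_colorable (T : finType) (k : nat) (e : rel T) (u w : T)
    (f : T -> 'I_k) :
  proper_coloring e f -> f u != f w -> colorable k (add_edge e u w).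
Proof.
move=> f_proper fuw; exists f.
move=> x y /or3P [/f_proper //|/andP [/eqP -> /eqP ->]|/andP [/eqP -> /eqP ->]] //.
by rewrite eq_sym.
Qed.

Lemma add_edge_triangle_free (T : finType) (e : rel T) (u w : T) :
  symmetric e -> irreflexive e -> u != w -> triangle_free e ->
  (forall z, e u z -> e w z -> False) -> triangle_free (add_edge e u w).
Proof.
move=> e_sym e_irr uw e_tf no_common.
have wu : w != u by rewrite eq_sym.
have sym' : symmetric (add_edge e u w).
  by move=> x y; rewrite /add_edge e_sym (andbC (x == u)) (andbC (x == w)) [X in _ || X]orbC.
have common' z : add_edge e u w u z -> add_edge e u w w z -> False.
  rewrite /add_edge !eqxx (negPf uw) (negPf wu) /= orbF.
  case/orP=> [uz|/eqP zw]; case/orP=> [wz|/eqP zu].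
  - exact: no_common wz.
  - by rewrite zu e_irr in uz.
  - by rewrite zw e_irr in wz.
  - by rewrite -zu zw eqxx in uw.
have on_new_edge x y z : add_edge e u w x y -> ~~ e x y ->
    add_edge e u w x z -> add_edge e u w y z -> False.
  case/or3P=> [-> //|/andP [/eqP -> /eqP ->]|/andP [/eqP -> /eqP ->]] _ xz yz.
  - exact: common' xz yz.
  - exact: common' yz xz.
move=> x y z [xy yz xz].
case exy: (e x y); last by apply: (on_new_edge x y z); rewrite ?exy.
case eyz: (e y z); last by apply: (on_new_edge y z x yz); rewrite ?eyz // sym'.
case exz: (e x z); last by apply: (on_new_edge x z y xz); rewrite ?exz // sym'.
by apply: (e_tf x y z).
Qed.

Lemma min_prime_compl_same_color (T : finType) (e : rel T) (u w : T)
    (f : T -> 'I_3) :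
  simple_graph e -> min_prime_compl e -> u != w -> ~~ e u w ->
  (forall z, e u z -> e w z -> False) -> proper_coloring e f -> f u = f w.
Proof.
move=> [e_sym e_irr] [_ _ e_tf _ e_max] uw nuw no_common f_proper.
apply/eqP/negPn/negP=> fuw; apply: (e_max u w uw nuw); split.
- exact: add_edge_triangle_free e_sym (fun x => negPf (e_irr x)) uw e_tf no_common.
- exact: add_edge_colorable f_proper fuw.
Qed.

Definition nbhd_coloring (T : finType) (e : rel T) (a b x : T) : 'I_3 :=
  if e a x then @Ordinal 3 1 isT else if e b x then @Ordinal 3 2 isT
  else @Ordinal 3 0 isT.

Lemma nbhd_coloring_proper (T : finType) (e : rel T) (a b : T) :
  triangle_free e ->
  (forall x y, ~~ e a x -> ~~ e b x -> ~~ e a y -> ~~ e b y -> ~~ e x y) ->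
  proper_coloring e (nbhd_coloring e a b).
Proof.
move=> e_tf outside_indep x y xy; rewrite /nbhd_coloring.
case ax: (e a x); case ay: (e a y); case bx: (e b x); case by_: (e b y) => //.
all: try by [case: (e_tf a x y) | case: (e_tf b x y)].
by move: (outside_indep x y); rewrite ax ay bx by_ xy; apply.
Qed.

Section DegreeTwoVertex.

Variables (T : finType) (e : rel T) (v a b : T).
Hypotheses (e_simple : simple_graph e) (e_min : min_prime_compl e).
Hypothesis v_nbhd : forall w, e v w = (w == a) || (w == b).
Hypothesis a_neq_b : a != b.

Let e_sym : symmetric e. Proof. by case: e_simple. Qed.
Let e_irr : irreflexive e. Proof. by case: e_simple => _ irr x; apply/negbTE. Qed.
Let e_tf : triangle_free e. Proof. by case: e_min. Qed.
Arguments e_tf : clear implicits.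
Let v_a : e v a. Proof. by rewrite v_nbhd eqxx. Qed.
Let v_b : e v b. Proof. by rewrite v_nbhd eqxx orbT. Qed.

Lemma nadj_nbhd_pair : ~~ e a b.
Proof. by apply/negP=> ab; apply: (e_tf v a b). Qed.

Lemma outside_same_color (f : T -> 'I_3) x :
  proper_coloring e f -> x != a -> x != b -> ~~ e a x -> ~~ e b x -> f v = f x.
Proof.
move=> f_proper xa xb nax nbx.
apply: min_prime_compl_same_color f_proper => //.
- by apply: contraNneq nax => <-; rewrite e_sym.
- by rewrite v_nbhd (negPf xa) (negPf xb).
- by move=> z; rewrite v_nbhd => /orP [] /eqP ->; rewrite e_sym ?(negPf nax) ?(negPf nbx).
Qed.

Lemma outside_independent x y :
  ~~ e a x -> ~~ e b x -> ~~ e a y -> ~~ e b y -> ~~ e x y.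
Proof.
move=> nax nbx nay nby.
case: (eqVneq x a) => [-> //|xa]; case: (eqVneq x b) => [-> //|xb].
case: (eqVneq y a) => [->|ya]; first by rewrite e_sym.
case: (eqVneq y b) => [->|yb]; first by rewrite e_sym.
have [_ _ _ [c c_proper] _] := e_min.
apply/negP=> /c_proper; rewrite -(outside_same_color c_proper xa xb nax nbx).
by rewrite -(outside_same_color c_proper ya yb nay nby) eqxx.
Qed.

Let col_proper : proper_coloring e (nbhd_coloring e a b).
Proof. exact: nbhd_coloring_proper e_tf outside_independent. Qed.

Lemma nbhds_cover x : [|| x == a, x == b, e a x | e b x].
Proof.
apply/negPn/negP; rewrite !negb_or => /and4P [xa xb nax nbx].
move: (outside_same_color col_proper xa xb nax nbx).
by rewrite /nbhd_coloring [e a v]e_sym v_a (negPf nax) (negPf nbx).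
Qed.

Lemma private_nbhds_adj p q :
  p \in private_nbhd e a b -> q \in private_nbhd e b a -> e p q.
Proof.
rewrite !inE => /andP [ap nbp] /andP [bq naq].
apply/negPn/negP=> npq.
have pq : p != q by apply: contraNneq naq => <-.
suff no_common z : e p z -> e q z -> False.
  have := min_prime_compl_same_color e_simple e_min pq npq no_common col_proper.
  by rewrite /nbhd_coloring ap (negPf naq) bq.
move=> pz qz; case/or4P: (nbhds_cover z) => [/eqP zz|/eqP zz|az|bz].
- by rewrite -zz e_sym qz in naq.
- by rewrite -zz e_sym pz in nbp.
- by apply: (e_tf a p z).
- by apply: (e_tf b q z).
Qed.

Lemma private_nbhd_nonempty : private_nbhd e a b != set0.
Proof.
apply/negP=> /eqP a0; have a_sub_b x : e a x -> e b x.
  move=> ax; apply/negPn/negP=> nbx.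
  have : x \in private_nbhd e a b by rewrite inE ax nbx.
  by rewrite a0 inE.
have [/set0Pn [q]|/negbNE/eqP b0] := boolP (private_nbhd e b a != set0).
  rewrite inE => /andP [bq naq].
  have aq : a != q by apply: contraNneq nadj_nbhd_pair => ->; rewrite e_sym.
  have no_common z : e a z -> e q z -> False.
    by move=> /a_sub_b bz qz; apply: (e_tf b q z).
  have := min_prime_compl_same_color e_simple e_min aq naq no_common col_proper.
  by rewrite /nbhd_coloring e_irr [e b a]e_sym (negPf nadj_nbhd_pair) (negPf naq) bq.
have b_sub_a x : e b x -> e a x.
  move=> bx; apply/negPn/negP=> nax.
  have : x \in private_nbhd e b a by rewrite inE bx nax.
  by rewrite b0 inE.
have nbhd_eq x : e a x = e b x by apply/idP/idP=> [/a_sub_b|/b_sub_a].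
have ab_closed : closed (compl_rel e) [pred x | (x == a) || (x == b)].
  apply: intro_closed.
    by apply: sym_connect_sym => x y; rewrite /compl_rel eq_sym e_sym.
  move=> x y /andP [_ nxy] xab; have {}nxy : ~~ e b y.
    by case/orP: xab nxy => /eqP ->; rewrite ?nbhd_eq.
  by move: (nbhds_cover y); rewrite nbhd_eq (negPf nxy) !orbF.
have [_ e_conn _ _ _] := e_min.
have := closed_connect ab_closed (e_conn a v); rewrite !inE eqxx /=.
by case/esym/orP=> /eqP vab; [move: v_a | move: v_b]; rewrite vab e_irr.
Qed.

Lemma adjacent_private x y :
  x != a -> x != b -> y != a -> y != b ->
  e x y = (x \in private_nbhd e a b) && (y \in private_nbhd e b a)
       || (x \in private_nbhd e b a) && (y \in private_nbhd e a b).
Proof.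
move=> xa xb ya yb; apply/idP/idP; last first.
  case/orP=> /andP [xP yQ]; first exact: private_nbhds_adj.
  by rewrite e_sym; apply: private_nbhds_adj.
move: (nbhds_cover x) (nbhds_cover y).
rewrite !inE (negPf xa) (negPf xb) (negPf ya) (negPf yb) /= => cx cy xy.
case ax: (e a x) cx; case bx: (e b x); case ay: (e a y) cy; case by_: (e b y) => //= _ _.
all: by [case: (e_tf a x y) | case: (e_tf b x y)].
Qed.

Lemma nbhd_parts_cover x :
  x \in [set a; b] :|: private_nbhd e a b :|: private_nbhd e b a :|: common_nbhd e a b.
Proof.
move: (nbhds_cover x); rewrite !inE.
by case: (x == a); case: (x == b); case: (e a x); case: (e b x).
Qed.

Lemma adjacency_structure x y :
  e x y =
    [|| (x == a) && (y \in private_nbhd e a b :|: common_nbhd e a b),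
        (y == a) && (x \in private_nbhd e a b :|: common_nbhd e a b),
        (x == b) && (y \in private_nbhd e b a :|: common_nbhd e a b),
        (y == b) && (x \in private_nbhd e b a :|: common_nbhd e a b),
        (x \in private_nbhd e a b) && (y \in private_nbhd e b a)
      | (x \in private_nbhd e b a) && (y \in private_nbhd e a b)].
Proof.
rewrite private_common_nbhdU private_common_nbhdUr.
have nab := nadj_nbhd_pair; have nba : ~~ e b a by rewrite e_sym.
case: (eqVneq x a) => [->|xa].
  by rewrite !inE e_irr (negPf a_neq_b) (negPf nba) /= !andbF !orbF.
case: (eqVneq x b) => [->|xb].
  by rewrite !inE e_irr (negPf nab) /= !andbF !orbF.
case: (eqVneq y a) => [->|ya].
  by rewrite !inE e_irr (negPf nba) (negPf a_neq_b) [e x a]e_sym /= !andbF !orbF.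
case: (eqVneq y b) => [->|yb].
  by rewrite !inE e_irr (negPf nab) [e x b]e_sym /= !andbF !orbF.
by rewrite /= adjacent_private.
Qed.

End DegreeTwoVertex.

Theorem theorem2 (T : finType) (e : rel T) :
  simple_graph e ->
  min_prime_compl e ->
  (exists v : T, degree e v = 2) ->
  exists (A B : T) (P Q R : {set T}),
    [/\ [/\ A != B, A \notin P :|: Q :|: R & B \notin P :|: Q :|: R],
        [/\ [disjoint P & Q], [disjoint Q & R] & [disjoint P & R]],
        [/\ P != set0, Q != set0 & R != set0],
        (forall x : T, x \in [set A; B] :|: P :|: Q :|: R) &
        (forall x y : T, e x y =
           [|| (x == A) && (y \in P :|: R), (y == A) && (x \in P :|: R),
               (x == B) && (y \in Q :|: R), (y == B) && (x \in Q :|: R),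
               (x \in P) && (y \in Q) | (x \in Q) && (y \in P)])].
Proof.
move=> e_simple e_min [v /eqP deg_v]; have [e_sym e_irr] := e_simple.
have [a [b [a_neq_b Nv]]] := cards2P _ deg_v.
have v_nbhd w : e v w = (w == a) || (w == b).
  by have := congr1 (fun S : {set T} => w \in S) Nv; rewrite /= !inE.
have v_nbhd' w : e v w = (w == b) || (w == a) by rewrite orbC.
have nab := nadj_nbhd_pair e_min v_nbhd.
exists a, b, (private_nbhd e a b), (private_nbhd e b a), (common_nbhd e a b).
split.
- by rewrite !inE (negPf (e_irr a)) (negPf (e_irr b)) (negPf nab) e_sym (negPf nab) a_neq_b.
- exact: nbhd_parts_disjoint.
- split; [exact: private_nbhd_nonempty v_nbhd | exact: private_nbhd_nonempty v_nbhd' |].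
  by apply/set0Pn; exists v; rewrite inE -!(e_sym v) !v_nbhd !eqxx orbT.
- exact: nbhd_parts_cover v_nbhd.
- exact: adjacency_structure v_nbhd a_neq_b.
Qed.
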